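(* Let $A$ be an $m\times n$ matrix with $m\ge n$ such that every square submatrix of $A$ is nonsingular. Then $A$ has rank $n$ and $A$ is completely unsparsifiable, i.e. $\operatorname{nnz}(AX)\ge (m-n+1)n$ for every invertible $n\times n$ matrix $X$. Moreover, the $(n+m)\times n$ matrix $\begin{pmatrix} I_n\\ A\end{pmatrix}$ (the $n\times n$ identity stacked above $A$) is optimally sparse.
   Context: $\operatorname{nnz}(M)$ is the number of nonzero entries of $M$. A matrix $M$ with $k$ columns is optimally sparse if $\operatorname{nnz}(MX)\ge\operatorname{nnz}(M)$ for every invertible $k\times k$ matrix $X$. A square submatrix of $A$ is $A(R,C)$ for row set $R$ and column set $C$ with $|R|=|C|\ge 1$. *)

From HB Require Import structures.
From mathcomp Require Import all_boot all_order all_algebra.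
Set Implicit Arguments. Unset Strict Implicit. Unset Printing Implicit Defensive.
Import GRing.Theory.
Local Open Scope ring_scope.

Definition nnz (F : fieldType) (p k : nat) (M : 'M[F]_(p, k)) : nat :=
  #|[set ij : 'I_p * 'I_k | M ij.1 ij.2 != 0]|.

Definition optimally_sparse (F : fieldType) (p k : nat) (M : 'M[F]_(p, k)) : Prop :=
  forall X : 'M[F]_k, X \in unitmx -> (nnz M <= nnz (M *m X))%N.

(* every square submatrix A(R,C), |R| = |C| = s.+1 >= 1, is nonsingular;
   R and C are given by their increasing enumerations f and g. *)
Definition all_square_submx_nonsingular (F : fieldType) (m n : nat)
    (A : 'M[F]_(m, n)) : Prop :=
  forall (s : nat) (f : 'I_s.+1 -> 'I_m) (g : 'I_s.+1 -> 'I_n),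
    {homo f : x y / (x < y)%N} -> {homo g : x y / (x < y)%N} ->
    \det (mxsub f g A) != 0.

From HB Require Import structures.
From mathcomp Require Import all_boot all_order all_algebra zify.
Set Implicit Arguments. Unset Strict Implicit. Unset Printing Implicit Defensive.
Import GRing.Theory.
Local Open Scope ring_scope.

(* If every square submatrix of A is nonsingular and x != 0 has support S,
   then A x cannot vanish on |S| rows R: otherwise the square submatrix A(R,S)
   would kill the restriction of x to S.  Hence A x has more than m - |S|
   nonzero entries.  For the columns x of an invertible X this gives
   nnz(A x) >= m - n + 1, and nnz(x) + nnz(A x) >= m + 1, which is also an
   upper bound for the number of nonzero entries of any column of [I; A]. *)

Lemma sorted_enum_ord n (S : {pred 'I_n}) :
  sorted (fun i j : 'I_n => (i < j)%N) (enum S).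
Proof.
rewrite /enum_mem -enumT; apply: sorted_filter; first exact: ltn_trans.
by have := iota_ltn_sorted 0 n; rewrite -val_enum_ord sorted_map.
Qed.

Lemma enum_val_ord_homo n (S : {pred 'I_n}) :
  {homo @enum_val _ S : i j / (i < j)%N}.
Proof.
move=> i j ij; have x0 := enum_val i; rewrite !(enum_val_nth x0).
have lt_trans : transitive (fun i j : 'I_n => (i < j)%N) := fun _ _ _ => @ltn_trans _ _ _.
by apply: (sorted_ltn_nth lt_trans _ (sorted_enum_ord S)); rewrite // inE -cardE.
Qed.

Section Support.

Variable F : fieldType.

Definition col_support p (v : 'cV[F]_p) : {set 'I_p} := [set i | v i ord0 != 0].

Lemma card_col_support p (v : 'cV[F]_p) :
  #|col_support v| = (\sum_i (v i ord0 != 0%R : nat))%N.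
Proof.
by rewrite -sum1_card big_mkcond; apply: eq_bigr => i _; rewrite inE; case: eqP.
Qed.

Lemma card_col_support_le p (v : 'cV[F]_p) : (#|col_support v| <= p)%N.
Proof. by rewrite -[p in (_ <= p)%N]card_ord max_card. Qed.

Lemma col_support0 p : col_support (0 : 'cV[F]_p) = set0.
Proof. by apply/setP => i; rewrite !inE mxE eqxx. Qed.

Lemma col_mulmx p q k (M : 'M[F]_(p, q)) (N : 'M[F]_(q, k)) j :
  col j (M *m N) = M *m col j N.
Proof. by rewrite !colE mulmxA. Qed.

Lemma nnzE p k (M : 'M[F]_(p, k)) :
  nnz M = (\sum_i \sum_j (M i j != 0%R : nat))%N.
Proof.
rewrite /nnz -sum1_card big_mkcond pair_bigA.
by apply: eq_bigr => -[i j] _; rewrite inE; case: eqP.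
Qed.

Lemma nnz_col_sum p k (M : 'M[F]_(p, k)) :
  nnz M = (\sum_j #|col_support (col j M)|)%N.
Proof.
rewrite nnzE exchange_big; apply: eq_bigr => j _.
by rewrite card_col_support; apply: eq_bigr => i _; rewrite mxE.
Qed.

Lemma nnz_le p k (M : 'M[F]_(p, k)) : (nnz M <= p * k)%N.
Proof. by rewrite /nnz (leq_trans (max_card _)) // card_prod !card_ord. Qed.

Lemma nnz_col_mx p1 p2 k (U : 'M[F]_(p1, k)) (D : 'M[F]_(p2, k)) :
  nnz (col_mx U D) = (nnz U + nnz D)%N.
Proof.
rewrite !nnzE big_split_ord; congr (_ + _)%N; apply: eq_bigr => i _;
  by apply: eq_bigr => j _; rewrite ?col_mxEu ?col_mxEd.
Qed.

Lemma nnz_scalar1 k : nnz (1%:M : 'M[F]_k) = k.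
Proof.
rewrite nnz_col_sum -[k in RHS]card_ord -sum1_card; apply: eq_bigr => j _.
rewrite -(cards1 j); apply: eq_card => i.
by rewrite !inE !mxE; case: (i == j); rewrite ?oner_neq0 ?eqxx.
Qed.

Lemma col_unitmx_neq0 k (X : 'M[F]_k) j : X \in unitmx -> col j X != 0.
Proof.
move=> Xu; apply/eqP => Xj0.
have : delta_mx j (0 : 'I_1) = 0 :> 'cV[F]_k.
  by rewrite -(mulKmx Xu (delta_mx j 0)) -colE Xj0 mulmx0.
by move/matrixP/(_ j 0)/eqP; rewrite !mxE !eqxx oner_eq0.
Qed.

End Support.

Section AllMinorsNonsingular.

Variables (F : fieldType) (m n : nat) (A : 'M[F]_(m, n)).
Hypothesis minorsA : all_square_submx_nonsingular A.

Lemma mxsub_unitmx k (f : 'I_k -> 'I_m) (g : 'I_k -> 'I_n) :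
  {homo f : x y / (x < y)%N} -> {homo g : x y / (x < y)%N} ->
  mxsub f g A \in unitmx.
Proof.
case: k f g => [|s] f g f_homo g_homo; last by rewrite unitmxE unitfE minorsA.
by rewrite unitmxE det_mx00 unitr1.
Qed.

Lemma card_col_support_mulmx (x : 'cV[F]_n) : x != 0 ->
  (m < #|col_support (A *m x)| + #|col_support x|)%N.
Proof.
move=> x_neq0; set S := col_support x; set R := ~: col_support (A *m x).
have := cardsC (col_support (A *m x)); rewrite card_ord -/R => card_m.
suff : (#|R| < #|S|)%N by lia.
rewrite ltnNge; apply: contra x_neq0 => SleR.
pose f (i : 'I_#|S|) := enum_val (widen_ord SleR i) : 'I_m.
pose g (i : 'I_#|S|) := enum_val i : 'I_n.
pose y := \col_i x (g i) 0.
have f_homo : {homo f : i j / (i < j)%N}.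
  by move=> i j ij; apply: enum_val_ord_homo.
have Ax_f i : (A *m x) (f i) 0 = 0.
  by have := enum_valP (widen_ord SleR i); rewrite !inE negbK => /eqP.
have By0 : mxsub f g A *m y = 0.
  apply/matrixP => i k; rewrite ord1 [RHS]mxE -(Ax_f i) [RHS]mxE.
  rewrite [RHS](bigID (mem S)) /= [X in _ = _ + X]big1 ?addr0; last first.
    by move=> j; rewrite inE negbK => /eqP ->; rewrite mulr0.
  by rewrite big_enum_val mxE; apply: eq_bigr => j _; rewrite !mxE.
have y0 : y = 0.
  by rewrite -(mulKmx (mxsub_unitmx f_homo (@enum_val_ord_homo _ _)) y) By0 mulmx0.
apply/eqP/matrixP => j k; rewrite ord1 mxE.
case: (boolP (j \in S)) => [jS | ]; last by rewrite inE negbK => /eqP.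
by move/matrixP: y0 => /(_ (enum_rank_in jS j) 0); rewrite !mxE /g enum_rankK_in.
Qed.

Lemma card_col_support_mulmx_unit (X : 'M[F]_n) j : X \in unitmx ->
  (m < #|col_support (A *m col j X)| + #|col_support (col j X)|)%N.
Proof. by move=> Xu; apply/card_col_support_mulmx/col_unitmx_neq0. Qed.

Lemma mxrank_all_minors_nonsingular : (n <= m)%N -> \rank A = n.
Proof.
move=> le_nm; apply/eqP; rewrite -[_ == _]/(row_full A) -cokermx_eq0.
have Kj0 j : col j (cokermx A) = 0.
  apply/eqP/negPn/negP => /card_col_support_mulmx.
  rewrite -col_mulmx mulmx_coker col0 col_support0 cards0.
  by have := card_col_support_le (col j (cokermx A)); lia.
by apply/eqP/matrixP => i j; move/matrixP: (Kj0 j) => /(_ i 0); rewrite !mxE.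
Qed.

End AllMinorsNonsingular.

Theorem mainTheorem4 (F : fieldType) (m n : nat) (A : 'M[F]_(m, n)) :
  (n <= m)%N ->
  all_square_submx_nonsingular A ->
  [/\ \rank A = n,
      (forall X : 'M[F]_n, X \in unitmx -> ((m - n + 1) * n <= nnz (A *m X))%N)
    & optimally_sparse (col_mx (1%:M : 'M[F]_n) A)].
Proof.
move=> le_nm minorsA; split.
- exact: mxrank_all_minors_nonsingular.
- move=> X Xu; rewrite nnz_col_sum mulnC -[n in (n * _)%N]card_ord -sum_nat_const.
  apply: leq_sum => j _; rewrite col_mulmx.
  have := card_col_support_mulmx_unit minorsA j Xu.
  by have := card_col_support_le (col j X); lia.
- move=> X Xu; rewrite mul_col_mx mul1mx !nnz_col_mx nnz_scalar1.
  apply: (leq_trans (leq_add (leqnn n) (nnz_le A))).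
  rewrite -mulSn mulnC -[n in (n * _)%N]card_ord -sum_nat_const !nnz_col_sum -big_split.
  apply: leq_sum => j _; rewrite /= col_mulmx addnC.
  exact: card_col_support_mulmx_unit.
Qed.
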